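(* Let $k\ge 1$ and let $G$ be a graph with $\delta(G)\ge k$. Let $S$ be a minimal $k$TDS of $G$ with $|S|=\Gamma_{\times k,t}(G)$, and for each $v\in S$ choose a vertex $v'\in\mathrm{opn}_k(v;S)$ and set $S_v=N_G(v')\cap S$ (a $k$-subset of $S$ containing $v$). Let $L=\bigcap_{v\in S}S_v$ and $\ell=|L|$. If $\ell<k$, then \[ \Gamma_{\times k,t}(G)\le\Gamma_{\times (k-\ell),t}(G)+\ell. \]
   Context: A set $S\subseteq V(G)$ is a $k$-tuple total dominating set ($k$TDS) of a graph $G$ with $\delta(G)\ge k$ if $|N_G(x)\cap S|\ge k$ for every $x\in V(G)$. The upper $k$-tuple total domination number $\Gamma_{\times k,t}(G)$ is the maximum cardinality of a minimal (with respect to inclusion) $k$TDS of $G$. For $v\in S$, a vertex $v'$ is a $k$-open private neighbor of $v$ with respect to $S$ if $v\in N_G(v')$ and $|N_G(v')\cap S|=k$; $\mathrm{opn}_k(v;S)$ is the set of such $v'$ (nonempty for every $v\in S$ when $S$ is a minimal $k$TDS). *)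

From mathcomp Require Import all_boot.
Set Implicit Arguments. Unset Strict Implicit. Unset Printing Implicit Defensive.

Definition simple_graph (T : finType) (e : rel T) : Prop :=
  irreflexive e /\ symmetric e.

Definition nbhd (T : finType) (e : rel T) (x : T) : {set T} := [set y | e x y].

Definition min_deg_ge (T : finType) (e : rel T) (k : nat) : Prop :=
  forall x : T, k <= #|nbhd e x|.

Definition kTDS (T : finType) (e : rel T) (k : nat) (S : {set T}) : bool :=
  [forall x, k <= #|nbhd e x :&: S|].

Definition minimal_kTDS (T : finType) (e : rel T) (k : nat) (S : {set T}) : bool :=
  minset (kTDS e k) S.

Definition upper_ktdom (T : finType) (e : rel T) (k : nat) : nat :=
  \max_(S : {set T} | minimal_kTDS e k S) #|S|.

Definition opn (T : finType) (e : rel T) (k : nat) (v : T) (S : {set T}) : {set T} :=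
  [set v' | (v \in nbhd e v') && (#|nbhd e v' :&: S| == k)].

(* Removing the common core L of the private-neighbour sets S_v from S lowers
   every count |N(x) ∩ S| by at most |L|, so S \ L is a (k - |L|)TDS; it is
   minimal because the private neighbour f v of each v in S \ L sees exactly
   k - |L| vertices of S \ L, one of them being v itself. Hence
   |S| = |S \ L| + |L| <= Γ_{×(k-ℓ),t} + ℓ. *)
From mathcomp Require Import all_boot.
From mathcomp Require Import zify.

Set Implicit Arguments.
Unset Strict Implicit.
Unset Printing Implicit Defensive.

Lemma card_setIDS (T : finType) (A S L : {set T}) :
  L \subset A :&: S -> #|A :&: (S :\: L)| = #|A :&: S| - #|L|.
Proof.
move=> sLAS; rewrite setIDA; have := cardsID L (A :&: S).
by rewrite (setIidPr sLAS); lia.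
Qed.

Lemma kTDS_setD (T : finType) (e : rel T) (k : nat) (S L : {set T}) :
  kTDS e k S -> kTDS e (k - #|L|) (S :\: L).
Proof.
move=> /forallP kS; apply/forallP => x; have := kS x.
rewrite setIDA; have := cardsID L (nbhd e x :&: S).
have := subset_leq_card (subsetIr (nbhd e x :&: S) L); lia.
Qed.

Lemma leq_upper_ktdom (T : finType) (e : rel T) (k : nat) (A : {set T}) :
  minimal_kTDS e k A -> #|A| <= upper_ktdom e k.
Proof. exact: (leq_bigmax_cond (F := fun B : {set T} => #|B|)). Qed.

Section PrivateCore.

Variables (T : finType) (e : rel T) (k : nat) (S L : {set T}) (f : T -> T).
Hypothesis kS : kTDS e k S.
Hypothesis f_opn : forall v, v \in S -> f v \in opn e k v S.
Hypothesis sL : forall v, v \in S -> L \subset nbhd e (f v) :&: S.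

Lemma card_opn_setD v :
  v \in S -> #|nbhd e (f v) :&: (S :\: L)| = k - #|L|.
Proof.
move=> vS; rewrite (card_setIDS (sL vS)).
by have := f_opn vS; rewrite inE => /andP [_ /eqP ->].
Qed.

Lemma minimal_kTDS_setD : minimal_kTDS e (k - #|L|) (S :\: L).
Proof.
apply/minsetP; split; first exact: kTDS_setD.
move=> B /forallP kB sBS; apply/eqP; rewrite eqEsubset sBS /=.
apply/subsetP => v vSL; apply/negPn/negP => vB.
have vS : v \in S by case/setDP: vSL.
have v_nbhd : v \in nbhd e (f v) by have := f_opn vS; rewrite inE => /andP [].
suff : nbhd e (f v) :&: B \proper nbhd e (f v) :&: (S :\: L).
  by move/proper_card; have := kB (f v); rewrite -(card_opn_setD vS); lia.
apply/properP; split; first exact: setIS.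
by exists v; rewrite inE ?v_nbhd ?vSL // negb_and vB orbT.
Qed.

End PrivateCore.

Theorem mainTheorem7 (T : finType) (e : rel T) (k : nat)
    (S : {set T}) (f : T -> T) :
  simple_graph e ->
  1 <= k ->
  min_deg_ge e k ->
  minimal_kTDS e k S ->
  #|S| = upper_ktdom e k ->
  (forall v, v \in S -> f v \in opn e k v S) ->
  #|\bigcap_(v in S) (nbhd e (f v) :&: S)| < k ->
  upper_ktdom e k <=
    upper_ktdom e (k - #|\bigcap_(v in S) (nbhd e (f v) :&: S)|)
    + #|\bigcap_(v in S) (nbhd e (f v) :&: S)|.
Proof.
move=> _ _ _ /minsetP [kS _] <- f_opn _.
set L := \bigcap_(v in S) (nbhd e (f v) :&: S).
have sL v : v \in S -> L \subset nbhd e (f v) :&: S by move=> vS; exact: bigcap_inf.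
have := leq_upper_ktdom (minimal_kTDS_setD kS f_opn sL).
have := cardsID L S; have := subset_leq_card (subsetIr S L); lia.
Qed.
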